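(* Let $n,m$ be positive integers with $m+2\le n$. Then $\gamma_{gr}(P_n^m)=n-m$.
   Context: $P_n^m$ has vertex set $[n]$, distinct $i,j$ adjacent iff $|i-j|\le m$. $\gamma_{gr}$ is the Grundy domination number: the maximum length of a sequence $(v_1,\dots,v_k)$ of distinct vertices whose set is dominating and such that each $N[v_i]\setminus\bigcup_{j<i}N[v_j]$ is non-empty ($N[\cdot]$ the closed neighborhood). *)

From mathcomp Require Import all_boot.
Set Implicit Arguments. Unset Strict Implicit. Unset Printing Implicit Defensive.

(* Graph P_n^m: vertex set [n] represented by 'I_n (vertex i+1 <-> ordinal i);
   distinct i,j adjacent iff |i-j| <= m
   (|i-j| <= m written with truncated subtraction on both sides). *)
Definition pm_adj (n m : nat) (i j : 'I_n) : bool :=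
  (i != j) && ((i : nat) - j <= m) && ((j : nat) - i <= m).

Definition cnbhd (n m : nat) (v : 'I_n) : {set 'I_n} :=
  [set u | (u == v) || pm_adj m u v].

Definition cnbhd_seq (n m : nat) (s : seq 'I_n) : {set 'I_n} :=
  \bigcup_(v <- s) cnbhd m v.

Definition grundy_dom_seq (n m : nat) (s : seq 'I_n) : Prop :=
  [/\ uniq s,
      (forall (s1 s2 : seq 'I_n) (v : 'I_n), s = s1 ++ v :: s2 ->
         ~~ (cnbhd m v \subset cnbhd_seq m s1)) &
      cnbhd_seq m s = [set: 'I_n]].

Definition grundy_dom_number_is (n m k : nat) : Prop :=
  (exists s : seq 'I_n, grundy_dom_seq m s /\ size s = k) /\
  (forall s : seq 'I_n, grundy_dom_seq m s -> size s <= k).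

From mathcomp Require Import all_boot.
From mathcomp Require Import zify.
Set Implicit Arguments. Unset Strict Implicit. Unset Printing Implicit Defensive.

(* Upper bound: along a Grundy sequence every vertex after the first enlarges
   the dominated set by at least its footprint, and the first vertex already
   dominates at least m + 1 vertices, so a sequence of length k dominates at
   least m + k vertices out of n.  Lower bound: the vertices 1, ..., n - m in
   increasing order form a Grundy dominating sequence, vertex i footprinting
   i + m, which no earlier vertex reaches. *)

Section PowerPath.

Variables n m : nat.

Definition grundy_legal (s : seq 'I_n) : Prop :=
  forall (s1 s2 : seq 'I_n) (v : 'I_n), s = s1 ++ v :: s2 ->
    ~~ (cnbhd m v \subset cnbhd_seq m s1).

Lemma mem_cnbhd (v x : 'I_n) :
  (x \in cnbhd m v) = ((x : nat) - v <= m) && ((v : nat) - x <= m).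
Proof. by rewrite inE /pm_adj; case: eqVneq => [->|//]; rewrite subnn. Qed.

Lemma cnbhd_seqP (s : seq 'I_n) x :
  reflect (exists2 v, v \in s & x \in cnbhd m v) (x \in cnbhd_seq m s).
Proof.
by rewrite /cnbhd_seq bigcup_seq; apply: (iffP bigcupP) => -[v]; exists v.
Qed.

Lemma cnbhd_seq1 (v : 'I_n) : cnbhd_seq m [:: v] = cnbhd m v.
Proof. by rewrite /cnbhd_seq big_seq1. Qed.

Lemma cnbhd_seq_rcons (s : seq 'I_n) v :
  cnbhd_seq m (rcons s v) = cnbhd_seq m s :|: cnbhd m v.
Proof. by rewrite -cats1 /cnbhd_seq big_cat /= big_seq1. Qed.

Lemma card_cnbhd_seq_cat (s1 s2 : seq 'I_n) :
  grundy_legal (s1 ++ s2) ->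
  #|cnbhd_seq m s1| + size s2 <= #|cnbhd_seq m (s1 ++ s2)|.
Proof.
elim: s2 s1 => [|v s2 IHs2] s1 legal; first by rewrite cats0 addn0.
have footprint := legal s1 s2 v erefl.
move: legal; rewrite -cat_rcons => /IHs2; rewrite cnbhd_seq_rcons.
apply: leq_trans; rewrite addnS -addSn leq_add2r; apply: proper_card.
rewrite properE subsetUl; apply: contra footprint; exact/subset_trans/subsetUr.
Qed.

Lemma card_cnbhd_gt (v : 'I_n) : m < n -> m < #|cnbhd m v|.
Proof.
(* The window [a, a + m] fits in [0, n) and contains v. *)
move=> ltmn; set a := minn v (n - m.+1).
pose f (i : 'I_m.+1) : 'I_n := insubd v (a + i).
have val_f i : val (f i) = a + i.
  by rewrite val_insubd ifT //; have := ltn_ord i; lia.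
have f_inj : injective f.
  by move=> i j /(congr1 val); rewrite !val_f => /addnI /val_inj.
rewrite -[m.+1]card_ord -(card_imset predT f_inj); apply: subset_leq_card.
apply/subsetP => _ /imsetP[i _ ->]; rewrite mem_cnbhd val_f.
by have := ltn_ord i; have := ltn_ord v; lia.
Qed.

Lemma grundy_legal_size_le (s : seq 'I_n) :
  m < n -> grundy_legal s -> size s <= n - m.
Proof.
case: s => [//|v t] ltmn legal.
have := @card_cnbhd_seq_cat [:: v] t legal; rewrite cnbhd_seq1.
have := max_card (cnbhd_seq m (v :: t)); rewrite card_ord.
by have := card_cnbhd_gt v ltmn; rewrite /=; lia.
Qed.

Lemma grundy_legal_sorted (s : seq 'I_n) :
  sorted (relpre val ltn) s -> all (fun v : 'I_n => v + m < n) s ->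
  grundy_legal s.
Proof.
move=> sorted_s /allP far_s s1 s2 v def_s.
have lt_s1_v : {in s1, forall w : 'I_n, w < v}.
  move: sorted_s; rewrite (sorted_pairwise (relpre_trans ltn_trans)) def_s.
  rewrite pairwise_cat => /and3P[/allrelP lt_s1 _ _] w /lt_s1; apply.
  exact: mem_head.
have /far_s v_far : v \in s by rewrite def_s mem_cat mem_head orbT.
apply/subsetPn; exists (Ordinal v_far); first by rewrite mem_cnbhd /=; lia.
by apply/cnbhd_seqP => -[w /lt_s1_v]; rewrite mem_cnbhd /=; lia.
Qed.

Lemma cnbhd_seq_setT (s : seq 'I_n) :
  m < n -> {subset [pred v : 'I_n | v < n - m] <= s} ->
  cnbhd_seq m s = [set: 'I_n].
Proof.
move=> ltmn init_s; apply/setP => x; rewrite inE; apply/cnbhd_seqP.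
have lt_xm_n : (x : nat) - m < n by rewrite (leq_ltn_trans (leq_subr m x)).
exists (Ordinal lt_xm_n); last by rewrite mem_cnbhd /=; lia.
by apply: init_s; rewrite inE /=; have := ltn_ord x; lia.
Qed.

Definition initial_vertices (k : nat) : seq 'I_n :=
  [seq v : 'I_n <- enum 'I_n | v < k].

Lemma val_initial_vertices k :
  k <= n -> map val (initial_vertices k) = iota 0 k.
Proof.
move=> lekn; rewrite -(filter_map val (fun i => i < k)) val_enum_ord.
exact: (filter_iota_ltn 0).
Qed.

Lemma grundy_dom_seq_initial_vertices :
  m < n -> grundy_dom_seq m (initial_vertices (n - m)).
Proof.
move=> ltmn; have val_s := val_initial_vertices (leq_subr m n).
have mem_s v : (v \in initial_vertices (n - m)) = (v < n - m).
  by rewrite mem_filter mem_enum andbT.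
split.
- by rewrite filter_uniq ?enum_uniq.
- apply: grundy_legal_sorted.
    by rewrite -sorted_map val_s iota_ltn_sorted.
  by apply/allP => v; rewrite mem_s; lia.
- by apply: cnbhd_seq_setT => // v; rewrite mem_s.
Qed.

End PowerPath.

Theorem corollary2 (n m : nat) :
  0 < n -> 0 < m -> m + 2 <= n -> grundy_dom_number_is n m (n - m).
Proof.
move=> _ _ le_m2_n; have ltmn : m < n by lia.
split.
- exists (initial_vertices n (n - m)); split.
    exact: grundy_dom_seq_initial_vertices.
  by rewrite -(size_map val) val_initial_vertices ?size_iota ?leq_subr.
- by move=> s [_ legal _]; exact: grundy_legal_size_le.
Qed.
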